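(* Let $\mathcal{G}$ be a compact group with normalized Haar measure $\lambda$ acting measurably on $\mathcal{X}$, let $\mathcal{P}$ be a $\mathcal{G}$-invariant distribution on $\mathcal{X}\times\mathcal{Y}$, let $\ell$ be the binary 0-1 loss, let $C>0$, and let $P$ be any distribution on a class $\mathcal{F}$ of functions $\mathcal{X}\to\mathcal{Y}$. Then $$\mathbb{E}_{f\sim P}\Big[\mathbb{E}_{\mathcal{D}^n\sim\mathcal{P}^n}\big[e^{n\mathscr{D}_C(\hat{R}_{\mathrm{aug}}(f,\mathcal{D}^n),R(f))}\big]\Big]\le\mathbb{E}_{f\sim P}\Big[\mathbb{E}_{\mathcal{D}^n\sim\mathcal{P}^n}\big[e^{n\mathscr{D}_C(\hat{R}(f,\mathcal{D}^n),R(f))}\big]\Big]=1$$ and $$\mathbb{E}_{f\sim P}\Big[\mathbb{E}_{\mathcal{D}^n\sim\mathcal{P}^n}\big[e^{n\mathscr{D}_C(\hat{R}^{(m)}_{\mathrm{aug}}(f,\mathcal{D}^n),R(f))}\big]\Big]\le\mathbb{E}_{f\sim P}\Big[\mathbb{E}_{\mathcal{D}^n\sim\mathcal{P}^n}\big[e^{n\mathscr{D}_C(\hat{R}(f,\mathcal{D}^n),R(f))}\big]\Big]=1.$$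
   Context: $\mathcal{P}$ is $\mathcal{G}$-invariant if $(gX,Y)\overset{d}{=}(X,Y)$ for all $g\in\mathcal{G}$. $\mathcal{D}^n=((X_i,Y_i))_{i=1}^n$ i.i.d. from $\mathcal{P}$. $R(f)=\mathbb{E}_{\mathcal{P}}[\ell(f(X),Y)]$, $\hat{R}(f,\mathcal{D}^n)=\frac1n\sum_i\ell(f(X_i),Y_i)$, $\hat{R}_{\mathrm{aug}}(f,\mathcal{D}^n)=\frac1n\sum_i\mathbb{E}_{G\sim\lambda}[\ell(f(GX_i),Y_i)]$, and the Monte Carlo augmented risk is $\hat{R}^{(m)}_{\mathrm{aug}}(f,\mathcal{D}^n)=\frac1{nm}\sum_{i=1}^n\sum_{j=1}^m\ell(f(G_{ij}X_i),Y_i)$ with $(G_{ij})$ i.i.d. from $\lambda$ independent of the data; in the expression involving $\hat{R}^{(m)}_{\mathrm{aug}}$ the inner expectation is taken jointly over $\mathcal{D}^n$ and the $G_{ij}$. For $q,p\in(0,1)$, $\mathscr{D}_C(q,p)=-\log(1-p(1-e^{-C}))-Cq$. *)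

From HB Require Import structures.
From mathcomp Require Import all_boot all_order all_algebra.
From mathcomp Require Import all_classical all_reals all_analysis.

Set Implicit Arguments.
Unset Strict Implicit.
Unset Printing Implicit Defensive.

Import Order.TTheory GRing.Theory Num.Theory.
Local Open Scope classical_set_scope.
Local Open Scope ring_scope.

Definition loss01 (R : realType) (Y : eqType) (y' y : Y) : R :=
  if y' == y then 0 else 1.

Definition DC (R : realType) (C q p : R) : R :=
  - ln (1 - p * (1 - expR (- C))) - C * q.

(* n-fold product expectation  E_{s ~ mu^n}[F s], as the iterated integral
   (equal to the integral against the product measure mu^n by Tonelli,
   for nonnegative measurable F); the sample s is a list of length n. *)
Fixpoint iexp d (T : measurableType d) (R : realType) (mu : probability T R)
    (n : nat) (F : seq T -> \bar R) : \bar R :=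
  match n with
  | 0 => F [::]
  | k.+1 => (\int[mu]_x iexp mu k (fun s => F (x :: s)))%E
  end.

Definition risk dX dY (X : measurableType dX) (Y : measurableType dY)
    (R : realType) (P : probability (X * Y)%type R) (f : X -> Y) : R :=
  fine (\int[P]_z (loss01 R (f z.1) z.2)%:E)%E.

Definition emp_risk dX dY (X : measurableType dX) (Y : measurableType dY)
    (R : realType) (n : nat) (f : X -> Y) (D : seq (X * Y)%type) : R :=
  n%:R^-1 * \sum_(z <- D) loss01 R (f z.1) z.2.

Definition aug_risk dG dX dY (G : measurableType dG) (X : measurableType dX)
    (Y : measurableType dY) (R : realType) (lam : probability G R)
    (act : G -> X -> X) (n : nat) (f : X -> Y) (D : seq (X * Y)%type) : R :=
  n%:R^-1 * \sum_(z <- D)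
     fine (\int[lam]_g (loss01 R (f (act g z.1)) z.2)%:E)%E.

(* Monte Carlo augmented risk (1/(nm)) sum_{i<n} sum_{j<m} l(f(G_ij X_i), Y_i),
   where G_ij is the (i*m+j)-th entry of the list Gs (of length n*m). *)
Definition mc_aug_risk dG dX dY (G : measurableType dG) (X : measurableType dX)
    (Y : measurableType dY) (R : realType) (act : G -> X -> X) (n m : nat)
    (f : X -> Y) (D : seq (X * Y)%type) (Gs : seq G) : R :=
  (n * m)%:R^-1 * \sum_(i < n) \sum_(j < m)
     loss01 R (f (act (nth point Gs (i * m + j)) (nth point D i).1))
              (nth point D i).2.

Definition G_invariant dG dX dY (G : measurableType dG) (X : measurableType dX)
    (Y : measurableType dY) (R : realType) (act : G -> X -> X)
    (P : probability (X * Y)%type R) : Prop :=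
  forall g (A : set (X * Y)%type), measurable A ->
    P ((fun z : X * Y => (act g z.1, z.2)) @^-1` A) = P A.

From HB Require Import structures.
From mathcomp Require Import all_boot all_order all_algebra.
From mathcomp Require Import all_classical all_reals all_analysis.
From mathcomp Require Import measurable_realfun ring lra.
Set Implicit Arguments.
Unset Strict Implicit.
Unset Printing Implicit Defensive.

Import Order.TTheory GRing.Theory Num.Theory.
Local Open Scope classical_set_scope.
Local Open Scope ring_scope.

(* Fix a hypothesis f and put p = R(f), c = 1 - e^{-C} and a = 1 - c p, so
   that e^{n D_C(q, p)} = a^{-n} e^{-C n q}.  For each of the three empirical
   risks, e^{-C n q} is a product over the sample of factors w(Z_i) -- for the
   Monte Carlo risk after integrating out the G_ij, which turns the m factors
   of sample i into (1 - c_m b(Z_i))^m with c_m = 1 - e^{-C/m} -- so its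
   expectation is a^{-n} (E w)^n.  Since the 0-1 loss only takes the values 0
   and 1, e^{-C l} = 1 - c l, hence E w = 1 - c p = a for the plain empirical
   risk.  For the augmented risks let b(x, y) = E_G[l(f(G x), y)]; both
   factors are convex functions of b that agree with 1 - c b at b = 0 and
   b = 1, so w <= 1 - c b, while G-invariance of P and Fubini give E b = p.
   Hence E w <= a and these moments are at most 1. *)

Lemma ge0_le_integral_nonmeasurable d (T : measurableType d) (R : realType)
    (mu : {measure set T -> \bar R}) (f g : T -> \bar R) :
  (forall x, 0 <= f x)%E -> (forall x, f x <= g x)%E ->
  (\int[mu]_x f x <= \int[mu]_x g x)%E.
Proof.
move=> f0 fg; have g0 x : (0 <= g x)%E by exact: le_trans (f0 x) (fg x).
rewrite !ge0_integralTE//; apply: ereal_sup_le => _ [s sf <-].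
by exists s => //= x; exact: le_trans (sf x) (fg x).
Qed.

Section probability_unit_interval.
Context d (T : measurableType d) (R : realType) (mu : probability T R).
Let mu_setT : (mu : {measure set T -> \bar R}) setT = 1%E := probability_setT mu.

Variable f : T -> R.
Hypotheses (mf : measurable_fun setT f) (f01 : forall x, 0 <= f x <= 1).

Lemma integral_prob_cst (r : R) : (\int[mu]_x r%:E = r%:E)%E.
Proof. by rewrite integral_cst// mu_setT mule1. Qed.

Lemma Rintegral_prob_cst (r : R) : \int[mu]_x r = r.
Proof. by rewrite /Rintegral integral_prob_cst. Qed.

Lemma integrable01 : mu.-integrable setT (EFin \o f).
Proof.
apply/integrableP; split; first exact/measurable_EFinP.
apply: (@le_lt_trans _ _ (\int[mu]_x 1%:E)%E); last first.
  by rewrite integral_prob_cst ltry.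
apply: ge0_le_integral => //=.
- by do 2 apply: measurableT_comp.
- by move=> x _; have /andP[f0 f1] := f01 x; rewrite lee_fin ger0_norm.
Qed.

Lemma EFin_Rintegral01 : (\int[mu]_x f x)%:E = (\int[mu]_x (f x)%:E)%E.
Proof. by rewrite fineK// integrable_fin_num// integrable01. Qed.

Lemma Rintegral_ge0_le1 : 0 <= \int[mu]_x f x <= 1.
Proof.
rewrite Rintegral_ge0 => [/=|x _]; last by case/andP: (f01 x).
rewrite -[leRHS](Rintegral_prob_cst 1) le_Rintegral//; first exact: integrable01.
- exact: finite_measure_integrable_cst.
- by move=> x _; case/andP: (f01 x).
Qed.

Lemma Rintegral_onem_scale (c : R) :
  \int[mu]_x (1 - c * f x) = 1 - c * \int[mu]_x f x.
Proof.
rewrite RintegralB// ?Rintegral_prob_cst ?RintegralZl//; first exact: integrable01.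
- exact: finite_measure_integrable_cst.
- exact: (integrableZl measurableT c integrable01).
Qed.

End probability_unit_interval.

Section iterated_expectation.
Context d (T : measurableType d) (R : realType) (mu : probability T R).

Lemma eq_iexp N (F F' : seq T -> \bar R) :
  (forall s, size s = N -> F s = F' s) -> iexp mu N F = iexp mu N F'.
Proof.
elim: N F F' => [|N IH] F F' FF' /=; first exact: FF'.
by apply: eq_integral => x _; apply: IH => s sN; apply: FF'; rewrite /= sN.
Qed.

Lemma iexp_ge0 N (F : seq T -> \bar R) :
  (forall s, 0 <= F s)%E -> (0 <= iexp mu N F)%E.
Proof.
elim: N F => [|N IH] F F0 //=.
by apply: integral_ge0 => x _; apply: IH => s.
Qed.

Lemma iexp_prod N (K : R) (g : nat -> T -> R) : 0 <= K ->
  (forall k, measurable_fun setT (g k)) -> (forall k x, 0 <= g k x <= 1) ->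
  iexp mu N (fun s => (K * \prod_(k < N) g k (nth point s k))%:E) =
  (K * \prod_(k < N) \int[mu]_x g k x)%:E.
Proof.
elim: N K g => [|N IH] K g K0 mg g01 /=; first by rewrite !big_ord0.
have g0_ge0 x : 0 <= g 0%N x by case/andP: (g01 0%N x).
transitivity (\int[mu]_x
    ((K * \prod_(k < N) \int[mu]_y g k.+1 y)%:E * (g 0%N x)%:E))%E.
  apply: eq_integral => x _.
  rewrite -EFinM mulrAC -(IH _ (fun k => g k.+1)) ?mulr_ge0//.
  by apply: eq_iexp => s _; rewrite big_ord_recl mulrA.
have prod_ge0 : 0 <= K * \prod_(k < N) \int[mu]_y g k.+1 y.
  rewrite mulr_ge0// prodr_ge0// => k _.
  by case/andP: (Rintegral_ge0_le1 mu (mg k.+1) (g01 k.+1)).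
rewrite ge0_integralZl_EFin//; last 2 first.
- by move=> x _; rewrite lee_fin.
- exact: measurableT_comp.
by rewrite -EFin_Rintegral01// -EFinM big_ord_recl mulrAC -mulrA.
Qed.

Lemma iexp_prod_seq N (K : R) (w : T -> R) : 0 <= K ->
  measurable_fun setT w -> (forall x, 0 <= w x <= 1) ->
  iexp mu N (fun s => (K * \prod_(x <- s) w x)%:E) =
  (K * (\int[mu]_x w x) ^+ N)%:E.
Proof.
move=> K0 mw w01.
rewrite (@eq_iexp N _ (fun s => (K * \prod_(k < N) w (nth point s k))%:E)).
  by rewrite (@iexp_prod N K (fun=> w))// prodr_const card_ord.
by move=> s sN; rewrite (big_nth point) sN big_mkord.
Qed.

End iterated_expectation.

Section real_bounds.
Variable R : realType.

Lemma onem_scale_ge0_le1 (s x : R) : 0 <= s <= 1 -> 0 <= x <= 1 ->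
  0 <= 1 - s * x <= 1.
Proof. by move=> /andP[s0 s1] /andP[x0 x1]; apply/andP; split; nra. Qed.

Lemma onem_expRN_ge0_le1 (x : R) : 0 <= x -> 0 <= 1 - expR (- x) <= 1.
Proof.
move=> x0; rewrite subr_ge0 expR_le1 oppr_le0 x0 /=.
by rewrite lerBlDr lerDl expR_ge0.
Qed.

Lemma expR_le_chord (C b : R) : 0 <= b -> b <= 1 ->
  expR (- C * b) <= 1 - (1 - expR (- C)) * b.
Proof.
move=> b0 b1; have := convex_expR (Itv01 b0 b1) (- C) 0.
rewrite !convRE /= expR0 /unstable.onem.
by congr (_ <= _); [congr expR | ]; ring.
Qed.

Lemma chordX_le (r b : R) (m : nat) : 0 <= r <= 1 -> 0 <= b <= 1 ->
  (1 - (1 - r) * b) ^+ m <= 1 - (1 - r ^+ m) * b.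
Proof.
move=> /andP[r0 r1] /andP[b0 b1].
elim: m => [|m IH]; first by rewrite !expr0 subrr mul0r subr0.
have rm0 : 0 <= r ^+ m by exact: exprn_ge0.
have rm1 : r ^+ m <= 1 by exact: exprn_ile1.
rewrite exprS (exprS r).
apply: le_trans (ler_wpM2l _ IH) _; first nra.
have : 0 <= b * (1 - b) * ((1 - r) * (1 - r ^+ m)) by rewrite !mulr_ge0 ?subr_ge0.
nra.
Qed.

Lemma prod_ord_mul (n m : nat) (F : nat -> R) :
  \prod_(k < n * m) F k = \prod_(i < n) \prod_(j < m) F (i * m + j)%N.
Proof.
elim: n => [|n IH]; first by rewrite mul0n !big_ord0.
by rewrite big_ord_recr -IH /= mulSnr big_split_ord.
Qed.

Lemma loss01_ge0_le1 (Y : eqType) (y' y : Y) : 0 <= loss01 R y' y <= 1.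
Proof. by rewrite /loss01; case: ifP; rewrite ?lexx ?ler01. Qed.

Lemma expR_loss01 (Y : eqType) (C : R) (y' y : Y) :
  expR (- C * loss01 R y' y) = 1 - (1 - expR (- C)) * loss01 R y' y.
Proof.
rewrite /loss01; case: ifP => _; first by rewrite !mulr0 expR0 subr0.
by rewrite !mulr1 opprB addrC subrK.
Qed.

End real_bounds.

Section invariant_distribution.
Context (R : realType) (dG dX dY : measure_display) (G : measurableType dG)
  (X : measurableType dX) (Y : measurableType dY) (act : G -> X -> X)
  (act_meas : measurable_fun setT (fun p : G * X => act p.1 p.2))
  (P : probability (X * Y)%type R) (P_inv : G_invariant act P).

Lemma measurable_act_fst g : measurable_fun setT (fun z : X * Y => (act g z.1, z.2)).
Proof.
apply/measurable_fun_pairP; split; last exact: measurable_snd.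
exact: measurableT_comp act_meas (measurable_fun_pair (measurable_cst g) measurable_fst).
Qed.

Lemma G_invariant_integral g (F : X * Y -> \bar R) :
  measurable_fun setT F -> (forall z, 0 <= F z)%E ->
  (\int[P]_z F (act g z.1, z.2) = \int[P]_z F z)%E.
Proof.
move=> mF F0; have mact := measurable_act_fst g.
transitivity (\int[pushforward P (fun z => (act g z.1, z.2))]_z F z)%E.
  by rewrite ge0_integral_pushforward.
by apply: eq_measure_integral => A mA _; exact: P_inv.
Qed.

End invariant_distribution.

Section augmented_loss.
Context (R : realType) (dG dX dY : measure_display) (G : measurableType dG)
  (X : measurableType dX) (Y : measurableType dY) (lam : probability G R)
  (act : G -> X -> X)
  (act_meas : measurable_fun setT (fun p : G * X => act p.1 p.2))
  (P : probability (X * Y)%type R) (P_inv : G_invariant act P) (f : X -> Y)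
  (ml : measurable_fun setT (fun z : X * Y => loss01 R (f z.1) z.2)).

Definition aug_loss (z : X * Y) : R :=
  \int[lam]_g loss01 R (f (act g z.1)) z.2.

Lemma measurable_loss_act :
  measurable_fun setT (fun q : G * (X * Y) => loss01 R (f (act q.1 q.2.1)) q.2.2).
Proof.
have mact : measurable_fun setT (fun q : G * (X * Y) => (act q.1 q.2.1, q.2.2)).
  apply/measurable_fun_pairP; split; last first.
    exact: measurableT_comp measurable_snd measurable_snd.
  have mpr : measurable_fun setT (fun q : G * (X * Y) => (q.1, q.2.1)).
    apply: measurable_fun_pair measurable_fst _.
    exact: measurableT_comp measurable_fst measurable_snd.
  exact: measurableT_comp act_meas mpr.
exact: measurableT_comp ml mact.
Qed.

Lemma measurable_loss_act_at z :
  measurable_fun setT (fun g => loss01 R (f (act g z.1)) z.2).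
Proof. exact: measurableT_comp measurable_loss_act (pair2_measurable z). Qed.

Lemma aug_loss_ge0_le1 z : 0 <= aug_loss z <= 1.
Proof.
exact: Rintegral_ge0_le1 (measurable_loss_act_at z) (fun=> loss01_ge0_le1 _ _ _).
Qed.

Lemma measurable_aug_loss : measurable_fun setT aug_loss.
Proof.
apply: (measurableT_comp (fine_measurable _)) => //.
apply: (@measurable_fun_fubini_tonelli_G _ _ _ _ _ lam
  (fun q : G * (X * Y) => (loss01 R (f (act q.1 q.2.1)) q.2.2)%:E)).
- exact: measurableT_comp measurable_loss_act.
- by move=> q; rewrite lee_fin; case/andP: (loss01_ge0_le1 R (f (act q.1 q.2.1)) q.2.2).
Qed.

Lemma Rintegral_aug_loss : \int[P]_z aug_loss z = risk P f.
Proof.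
have l01 (z : X * Y) := loss01_ge0_le1 R (f z.1) z.2.
apply: EFin_inj; rewrite -[risk P f]/(\int[P]_z loss01 R (f z.1) z.2).
rewrite !EFin_Rintegral01//; last 2 first.
- exact: measurable_aug_loss.
- exact: aug_loss_ge0_le1.
transitivity (\int[P]_z \int[lam]_g (loss01 R (f (act g z.1)) z.2)%:E)%E.
  apply: eq_integral => z _.
  by rewrite -(EFin_Rintegral01 lam (measurable_loss_act_at z)
    (fun=> loss01_ge0_le1 R _ _)).
rewrite -(fubini_tonelli
  (fun q : G * (X * Y) => (loss01 R (f (act q.1 q.2.1)) q.2.2)%:E)); last 2 first.
- exact: measurableT_comp measurable_loss_act.
- by move=> q; rewrite lee_fin; case/andP: (l01 (act q.1 q.2.1, q.2.2)).
transitivity (\int[lam]_g \int[P]_z (loss01 R (f z.1) z.2)%:E)%E.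
  apply: eq_integral => g _.
  apply: (G_invariant_integral act_meas P_inv g
    (F := fun z => (loss01 R (f z.1) z.2)%:E)).
  - exact: measurableT_comp ml.
  - by move=> z; rewrite lee_fin; case/andP: (l01 z).
by rewrite -EFin_Rintegral01// integral_prob_cst.
Qed.

End augmented_loss.

Section catoni_moments.
Context (R : realType) (dG dX dY : measure_display) (G : measurableType dG)
  (X : measurableType dX) (Y : measurableType dY) (lam : probability G R)
  (act : G -> X -> X)
  (act_meas : measurable_fun setT (fun p : G * X => act p.1 p.2))
  (P : probability (X * Y)%type R) (P_inv : G_invariant act P) (f : X -> Y)
  (ml : measurable_fun setT (fun z : X * Y => loss01 R (f z.1) z.2))
  (C : R) (C_gt0 : 0 < C) (n : nat).

Let l (z : X * Y) := loss01 R (f z.1) z.2.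
Let b := aug_loss lam act f.
Let p := risk P f.
Let c := 1 - expR (- C).
Let a := 1 - p * c.

Let l01 z : 0 <= l z <= 1 := loss01_ge0_le1 R (f z.1) z.2.
Let b01 z : 0 <= b z <= 1 := aug_loss_ge0_le1 lam act_meas ml z.
Let mb : measurable_fun setT b := measurable_aug_loss lam act_meas ml.

Let c01 : 0 <= c <= 1 := onem_expRN_ge0_le1 (ltW C_gt0).

Let a_gt0 : 0 < a.
Proof.
have /andP[p0 p1] := Rintegral_ge0_le1 P ml l01.
have /andP[c0 _] := c01.
have pc_le_c : p * c <= c by rewrite ler_piMl.
have : 0 < expR (- C) := expR_gt0 _.
rewrite /a /c in pc_le_c *; lra.
Qed.

Let aVn_ge0 : 0 <= a ^- n. Proof. by rewrite invr_ge0 exprn_ge0// ltW. Qed.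

Lemma expR_nDC q : expR (n%:R * DC C q p) = a ^- n * expR (- C * (n%:R * q)).
Proof.
have -> : n%:R * DC C q p = - (n%:R * ln a) + - C * (n%:R * q).
  by rewrite /DC /a /c; ring.
by rewrite expRD expRN expRM_natl lnK// posrE.
Qed.

Lemma catoni_moment_le1 (w : X * Y -> R) : measurable_fun setT w ->
  (forall z, 0 <= w z) -> (forall z, w z <= 1 - c * b z) ->
  a ^- n * (\int[P]_z w z) ^+ n <= 1.
Proof.
move=> mw w0 w_le.
have mcb : measurable_fun setT (fun z => 1 - c * b z).
  by apply: measurable_funB => //; apply: measurable_funM.
have cb01 z : 0 <= 1 - c * b z <= 1 by exact: onem_scale_ge0_le1.
have w01 z : 0 <= w z <= 1.
  by rewrite w0 (le_trans (w_le z))//; case/andP: (cb01 z).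
have Ew_le_a : \int[P]_z w z <= a.
  rewrite /a /p mulrC -(Rintegral_aug_loss lam act_meas P_inv ml).
  rewrite -Rintegral_onem_scale//.
  by apply: le_Rintegral => //; exact: integrable01.
have an_neq0 : a ^+ n != 0 by rewrite expf_neq0// gt_eqF.
rewrite -(mulVf an_neq0); apply: ler_wpM2l; first exact: aVn_ge0.
apply: lerXn2r => //; rewrite nnegrE ?(ltW a_gt0)//.
by case/andP: (Rintegral_ge0_le1 P mw w01).
Qed.

Hypothesis n_gt0 : (0 < n)%N.

Let n_neq0 : n%:R != 0 :> R. Proof. by rewrite pnatr_eq0 -lt0n. Qed.

Lemma iexp_emp_risk_DC :
  iexp P n (fun D => (expR (n%:R * DC C (emp_risk R n f D) p))%:E) = 1%E.
Proof.
have m_onem_l : measurable_fun setT (fun z => 1 - c * l z).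
  by apply: measurable_funB => //; apply: measurable_funM.
have onem_l01 z : 0 <= 1 - c * l z <= 1 by exact: onem_scale_ge0_le1.
rewrite (_ : (fun D => _) = fun D => (a ^- n * \prod_(z <- D) (1 - c * l z))%:E).
  rewrite iexp_prod_seq// Rintegral_onem_scale//.
  have -> : \int[P]_z l z = p by [].
  by rewrite (mulrC c) -/a mulVf// expf_neq0// gt_eqF.
apply: funext => D; rewrite expR_nDC /emp_risk mulVKf// mulr_sumr expR_sum.
by congr (_ * _)%:E; apply: eq_bigr => z _; exact: expR_loss01.
Qed.

Lemma iexp_aug_risk_DC_le1 :
  (iexp P n (fun D => (expR (n%:R * DC C (aug_risk lam act n f D) p))%:E) <= 1)%E.
Proof.
have mw : measurable_fun setT (fun z => expR (- C * b z)).
  by apply: measurableT_comp => //; apply: measurable_funM.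
have w01 z : 0 <= expR (- C * b z) <= 1.
  have /andP[b0 _] := b01 z.
  by rewrite expR_ge0 expR_le1 mulNr oppr_le0 mulr_ge0// ltW.
rewrite (_ : (fun D => _) = fun D => (a ^- n * \prod_(z <- D) expR (- C * b z))%:E).
  rewrite iexp_prod_seq// lee_fin; apply: catoni_moment_le1 => // z.
  by have /andP[b0 b1] := b01 z; exact: expR_le_chord.
apply: funext => D; rewrite expR_nDC /aug_risk mulVKf//.
by rewrite mulr_sumr expR_sum.
Qed.

Section monte_carlo.
Variable m : nat.
Hypothesis m_gt0 : (0 < m)%N.

Let m_neq0 : m%:R != 0 :> R. Proof. by rewrite pnatr_eq0 -lt0n. Qed.

Let c' := 1 - expR (- (C / m%:R)).

Let c'01 : 0 <= c' <= 1.
Proof. by apply: onem_expRN_ge0_le1; rewrite divr_ge0// ltW. Qed.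

Lemma iexp_mc_aug_risk_DC D :
  iexp lam (n * m) (fun Gs =>
    (expR (n%:R * DC C (mc_aug_risk R act n m f D Gs) p))%:E) =
  (a ^- n * \prod_(i < n) (1 - c' * b (nth point D i)) ^+ m)%:E.
Proof.
pose h i x := 1 - c' * loss01 R (f (act x (nth point D i).1)) (nth point D i).2.
have mh i : measurable_fun setT (h i).
  apply: measurable_funB => //; apply: measurable_funM => //.
  exact: (measurable_loss_act_at act_meas ml (nth point D i)).
have h01 i x : 0 <= h i x <= 1 by exact: onem_scale_ge0_le1 (loss01_ge0_le1 _ _ _).
have idx_div (i : nat) (j : 'I_m) : ((i * m + j) %/ m)%N = i.
  by rewrite divnMDl// divn_small// addn0.
rewrite (_ : (fun Gs => _) =
    fun Gs => (a ^- n * \prod_(k < n * m) h (k %/ m)%N (nth point Gs k))%:E).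
  rewrite (@iexp_prod _ _ _ lam (n * m) _ (fun k => h (k %/ m)%N))//.
  congr (_ * _)%:E; rewrite (prod_ord_mul _ _ (fun k => \int[lam]_x h (k %/ m)%N x)).
  apply: eq_bigr => i _.
  rewrite -[in RHS](card_ord m) -prodr_const; apply: eq_bigr => j _.
  rewrite idx_div (Rintegral_onem_scale lam (measurable_loss_act_at act_meas ml _))//.
  by move=> x; exact: loss01_ge0_le1.
apply: funext => Gs; rewrite expR_nDC /mc_aug_risk.
have -> : forall S, - C * (n%:R * ((n * m)%:R^-1 * S)) = - (C / m%:R) * S.
  by move=> S; rewrite natrM invfM; field; rewrite n_neq0 m_neq0.
rewrite mulr_sumr expR_sum (prod_ord_mul _ _ (fun k => h (k %/ m)%N (nth point Gs k))).
congr (_ * _)%:E; apply: eq_bigr => i _.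
rewrite mulr_sumr expR_sum; apply: eq_bigr => j _.
by rewrite expR_loss01 idx_div.
Qed.

Lemma iexp_mc_aug_risk_DC_le1 :
  (iexp P n (fun D => iexp lam (n * m) (fun Gs =>
    (expR (n%:R * DC C (mc_aug_risk R act n m f D Gs) p))%:E)) <= 1)%E.
Proof.
have mw : measurable_fun setT (fun z => (1 - c' * b z) ^+ m).
  by apply: measurable_funX; apply: measurable_funB => //; apply: measurable_funM.
have w01 z : 0 <= (1 - c' * b z) ^+ m <= 1.
  have /andP[w0 w1] := onem_scale_ge0_le1 c'01 (b01 z).
  by rewrite exprn_ge0// exprn_ile1.
rewrite (@eq_iexp _ _ _ _ n _
  (fun D => (a ^- n * \prod_(z <- D) (1 - c' * b z) ^+ m)%:E)).
  rewrite iexp_prod_seq// lee_fin; apply: catoni_moment_le1 => // z.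
  - by case/andP: (w01 z).
  - have := @chordX_le R (expR (- (C / m%:R))) (b z) m _ (b01 z).
    rewrite -expRM_natl mulrN mulrCA mulfV// mulr1; apply.
    by rewrite expR_ge0 expR_le1 oppr_le0 divr_ge0// ltW.
by move=> D Dn; rewrite iexp_mc_aug_risk_DC (big_nth point) Dn big_mkord.
Qed.

End monte_carlo.

End catoni_moments.

Theorem lemmaA2 (R : realType)
  (dG dX dY dT : measure_display)
  (G : measurableType dG) (X : measurableType dX) (Y : measurableType dY)
  (Theta : measurableType dT)
  (* group structure on G *)
  (mul : G -> G -> G) (inv : G -> G) (one : G)
  (mulA : forall a b c, mul a (mul b c) = mul (mul a b) c)
  (mul1g : forall a, mul one a = a)
  (mulVg : forall a, mul (inv a) a = one)
  (mul_meas : measurable_fun setT (fun p : G * G => mul p.1 p.2))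
  (inv_meas : measurable_fun setT inv)
  (* normalized (left) Haar measure *)
  (lam : probability G R)
  (lam_haar : forall g (A : set G), measurable A ->
      lam [set mul g a | a in A] = lam A)
  (* measurable group action on X *)
  (act : G -> X -> X)
  (act_meas : measurable_fun setT (fun p : G * X => act p.1 p.2))
  (act1 : forall x, act one x = x)
  (actM : forall g h x, act (mul g h) x = act g (act h x))
  (* G-invariant data distribution *)
  (P : probability (X * Y)%type R)
  (P_inv : G_invariant act P)
  (* function class F = {h t | t : Theta} with a distribution on it *)
  (h : Theta -> X -> Y)
  (h_meas : measurable_fun setT
      (fun p : Theta * (X * Y) => loss01 R (h p.1 p.2.1) p.2.2))
  (PF : probability Theta R)
  (C : R) (C_gt0 : 0 < C) (n m : nat) (n_gt0 : (0 < n)%N) (m_gt0 : (0 < m)%N) :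
  let E_emp := (\int[PF]_t iexp P n (fun D =>
        (expR (n%:R * DC C (emp_risk R n (h t) D) (risk P (h t))))%:E))%E in
  let E_aug := (\int[PF]_t iexp P n (fun D =>
        (expR (n%:R * DC C (aug_risk lam act n (h t) D) (risk P (h t))))%:E))%E in
  let E_mc := (\int[PF]_t iexp P n (fun D => iexp lam (n * m) (fun Gs =>
        (expR (n%:R * DC C (mc_aug_risk R act n m (h t) D Gs) (risk P (h t))))%:E)))%E in
  [/\ (E_aug <= E_emp)%E, (E_mc <= E_emp)%E & E_emp = 1%E].
Proof.
move=> E_emp E_aug E_mc.
have ml t : measurable_fun setT (fun z : X * Y => loss01 R (h t z.1) z.2).
  exact: measurableT_comp h_meas (pair1_measurable t).
have E_emp1 : E_emp = 1%E.
  rewrite -(integral_prob_cst PF 1); apply: eq_integral => t _.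
  exact: iexp_emp_risk_DC.
split=> //; rewrite E_emp1 -(integral_prob_cst PF 1).
- apply: ge0_le_integral_nonmeasurable => t.
    by apply: iexp_ge0 => D; rewrite lee_fin expR_ge0.
  exact: iexp_aug_risk_DC_le1.
- apply: ge0_le_integral_nonmeasurable => t.
    by apply: iexp_ge0 => D; apply: iexp_ge0 => Gs; rewrite lee_fin expR_ge0.
  exact: iexp_mc_aug_risk_DC_le1.
Qed.
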